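(* Let $K$ be a virtual knot diagram. If $W_K(t)\neq W_K(t^{-1})$, then the flat virtual knot $F(K)$ is nontrivial, i.e. not equivalent to the flat diagram of an embedded circle with no crossings.
   Context: Virtual knot diagrams, real crossings with writhes $w(c)\in\{\pm1\}$, generalized Reidemeister moves as usual. Gauss diagram $G(K)$: counterclockwise circle with, for each real crossing $c$, a chord directed from the overcrossing preimage to the undercrossing preimage, signed $w(c)$. A chord $d$ crosses $c$ if their endpoints interlace; viewing $c$ as an arrow in the disk, $d$ crosses $c$ from left to right if its tail is left of $c$ and its head right of $c$, else from right to left. With $r_\pm(c)$, $l_\pm(c)$ the numbers of chords of sign $\pm$ crossing $c$ from left to right, resp. right to left, $\mathrm{Ind}(c)=r_+(c)-r_-(c)-l_+(c)+l_-(c)$. Writhe polynomial $W_K(t)=\sum_{n\neq0}a_n(K)t^n$ with $a_n(K)=\sum_{\mathrm{Ind}(c)=n}w(c)$. $F(K)$ is the flat virtual knot obtained by replacing every real crossing of $K$ by a flat crossing; flat virtual knots are considered up to flat generalized Reidemeister moves. *)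

(* Virtual knot diagrams are represented by their Gauss
   diagrams (Gauss words read counterclockwise from a base point), flat
   virtual knots by flat Gauss diagrams (virtual strings) modulo the
   Gauss-diagram versions of the flat generalized Reidemeister moves. *)
From HB Require Import structures.
From mathcomp Require Import all_boot all_order all_algebra.
From Stdlib Require Import Relations.
Set Implicit Arguments. Unset Strict Implicit. Unset Printing Implicit Defensive.
Import Order.TTheory GRing.Theory Num.Theory.

(* A letter (c, true) is the tail (overcrossing preimage) of chord c,
   (c, false) its head (undercrossing preimage). *)
Definition letter := (nat * bool)%type.
Definition gword := seq letter.

Definition gauss_wf (w : gword) : bool :=
  uniq w && all (fun e : letter => (e.1, ~~ e.2) \in w) w.

Definition labels (w : gword) : seq nat := undup (map fst w).

Definition tailpos (w : gword) (c : nat) : nat := index (c, true) w.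
Definition headpos (w : gword) (c : nat) : nat := index (c, false) w.

(* position p lies to the right of chord c (viewed as an arrow in the disk
   bounded by the counterclockwise circle): strictly inside the
   counterclockwise arc from the tail of c to the head of c *)
Definition right_of (w : gword) (c p : nat) : bool :=
  let ti := tailpos w c in let hi := headpos w c in
  if ti < hi then (ti < p) && (p < hi) else (ti < p) || (p < hi).

Definition wsign (s : nat -> bool) (c : nat) : int :=
  if s c then 1%R else (-1)%R.

Definition ind_contrib (w : gword) (s : nat -> bool) (c d : nat) : int :=
  let rt := right_of w c (tailpos w d) in
  let rh := right_of w c (headpos w d) in
  if ~~ rt && rh then wsign s d
  else if rt && ~~ rh then (- wsign s d)%R
  else 0%R.

(* Ind(c) = r_+(c) - r_-(c) - l_+(c) + l_-(c) *)
Definition Ind (w : gword) (s : nat -> bool) (c : nat) : int :=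
  (\sum_(d <- labels w | d != c) ind_contrib w s c d)%R.

(* coefficients of the writhe polynomial W_K(t) = sum_{n<>0} a_n t^n,
   as a function int -> int (coefficient of t^n; coefficient of t^0 is 0) *)
Definition writhe_poly (w : gword) (s : nat -> bool) (n : int) : int :=
  if n == 0%R then 0%R
  else (\sum_(c <- labels w | Ind w s c == n) wsign s c)%R.

(* The flat arrow at a crossing goes from the
   strand A to the strand B where B crosses A from right to left; this is
   the Gauss arrow for a positive crossing and its reverse for a negative
   one. *)
Definition flat_of (w : gword) (s : nat -> bool) : gword :=
  map (fun e : letter => (e.1, if s e.1 then e.2 else ~~ e.2)) w.

Definition fresh (a : nat) (w : gword) : bool := a \notin map fst w.

Definition flag_in (x : nat) (p1 p2 : letter) : bool :=
  if p1.1 == x then p1.2 else p2.2.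

Definition pair_is (p1 p2 : letter) (x y : nat) : bool :=
  ((p1.1 == x) && (p2.1 == y)) || ((p1.1 == y) && (p2.1 == x)).

(* Realizability of three pairwise crossing strands forming a triangle.
   Strand 1 carries (p1,p2), strand 2 (q1,q2), strand 3 (r1,r2), in the
   order of traversal.  x12, x13, x23 are the crossings.  o_i records the
   order of the crossings on strand i, s_ij whether the flat arrow at x_ij
   goes from strand i to strand j.  Three oriented lines realize the data
   iff o1 o3 = s12 s23 and o2 o3 = s12 s13 (as signs). *)
Definition tri_ok (p1 p2 q1 q2 r1 r2 : letter) : Prop :=
  exists x12 x13 x23 : nat,
    [/\ uniq [:: x12; x13; x23], pair_is p1 p2 x12 x13,
        pair_is q1 q2 x12 x23 & pair_is r1 r2 x13 x23] /\
    let o1 := p1.1 == x12 in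
    let o2 := q1.1 == x12 in
    let o3 := r1.1 == x13 in
    let s12 := flag_in x12 p1 p2 in
    let s13 := flag_in x13 p1 p2 in
    let s23 := flag_in x23 q1 q2 in
    ((o1 == o3) == (s12 == s23)) /\ ((o2 == o3) == (s12 == s13)).

Inductive flat_move : gword -> gword -> Prop :=
| FM_rot (w : gword) : flat_move w (rot 1 w)
| FM_relabel (w : gword) (f : nat -> nat) :
    injective f -> flat_move w (map (fun e : letter => (f e.1, e.2)) w)
| FM_R1 (u v : gword) (a : nat) (b : bool) :
    fresh a (u ++ v) ->
    flat_move (u ++ v) (u ++ [:: (a, b); (a, ~~ b)] ++ v)
| FM_R2 (u1 u2 u3 : gword) (a b : nat) (t swap : bool) :
    a != b -> fresh a (u1 ++ u2 ++ u3) -> fresh b (u1 ++ u2 ++ u3) ->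
    flat_move (u1 ++ u2 ++ u3)
      (u1 ++ [:: (a, t); (b, ~~ t)] ++ u2 ++
       (if swap then [:: (b, t); (a, ~~ t)] else [:: (a, ~~ t); (b, t)]) ++ u3)
| FM_R3 (u1 u2 u3 u4 : gword) (p1 p2 q1 q2 r1 r2 : letter) :
    tri_ok p1 p2 q1 q2 r1 r2 ->
    flat_move (u1 ++ [:: p1; p2] ++ u2 ++ [:: q1; q2] ++ u3 ++ [:: r1; r2] ++ u4)
              (u1 ++ [:: p2; p1] ++ u2 ++ [:: q2; q1] ++ u3 ++ [:: r2; r1] ++ u4).

Definition flat_equiv : gword -> gword -> Prop :=
  clos_refl_sym_trans gword flat_move.

Definition trivial_flat : gword := [::].

(* Count every arrow of a flat Gauss diagram positively and let J(c) be the
   resulting index of the chord c.  Reversing the arrow of c negates its index,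
   and reversing an arrow d negates its contribution to every other index, so
   for the chords of F(K) we get J(c) = w(c) Ind(c).  Hence the coefficient of
   t^n in W_K(t) - W_K(t^-1) is #{c | J(c) = n} - #{c | J(c) = -n}, computed on
   F(K) alone.  This count is a flat invariant: a flat R1 move adds a chord of
   index 0, an R2 move adds two chords of opposite indices and fixes all other
   indices, and an R3 move fixes every index.  It vanishes on the trivial knot. *)

From HB Require Import structures.
From mathcomp Require Import all_boot all_order all_algebra.
From mathcomp Require Import zify.
From Stdlib Require Import FunctionalExtensionality.
Import Order.TTheory GRing.Theory Num.Theory.
Set Implicit Arguments. Unset Strict Implicit. Unset Printing Implicit Defensive.

Local Open Scope ring_scope.

Definition right_arc (t h p : nat) : bool :=
  if (t < h)%N then (t < p < h)%N else (t < p)%N || (p < h)%N.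

Definition cross_sign (rt rh : bool) : int :=
  if ~~ rt && rh then 1 else if rt && ~~ rh then -1 else 0.

Lemma cross_signNN x y : cross_sign (~~ x) (~~ y) = - cross_sign x y.
Proof. by case: x; case: y. Qed.

Lemma cross_signC x y : cross_sign y x = - cross_sign x y.
Proof. by case: x; case: y. Qed.

Lemma cross_sign_id x : cross_sign x x = 0.
Proof. by case: x. Qed.

Lemma right_arc_mono (g : nat -> nat) t h p :
  {in [:: t; h; p] &, forall x y, (g x < g y)%N = (x < y)%N} ->
  right_arc (g t) (g h) (g p) = right_arc t h p.
Proof. by move=> g_mono; rewrite /right_arc !g_mono // !inE eqxx ?orbT. Qed.

Lemma right_arc_rev t h p : t != h -> p != t -> p != h ->
  right_arc h t p = ~~ right_arc t h p.
Proof. by rewrite /right_arc => *; case: (ltngtP t h) => ?; lia. Qed.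

(* Moving the base point one letter forward lowers every position by one,
   cyclically; the side of a point with respect to a chord is unchanged. *)
Lemma right_arc_rot n t h p : (t < n)%N -> (h < n)%N -> (p < n)%N ->
  t != h -> p != t -> p != h ->
  let g k := if k == 0%N then n.-1 else k.-1 in
  right_arc (g t) (g h) (g p) = right_arc t h p.
Proof.
move=> ? ? ? ? ? ? g; rewrite /g /right_arc.
by case: eqP => ?; case: eqP => ?; case: eqP => ?; repeat case: ifP; lia.
Qed.

Lemma right_arc_succ t h p : t != p -> t != p.+1 -> h != p -> h != p.+1 ->
  right_arc t h p.+1 = right_arc t h p.
Proof. by move=> *; rewrite /right_arc; repeat case: ifP => ?; lia. Qed.

Lemma right_arc_short m p : p != m -> p != m.+1 -> right_arc m m.+1 p = false.
Proof. by move=> *; rewrite /right_arc; repeat case: ifP => ?; lia. Qed.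

Lemma right_arc_short_rev m p : p != m -> p != m.+1 -> right_arc m.+1 m p = true.
Proof. by move=> *; rewrite /right_arc; repeat case: ifP => ?; lia. Qed.

Definition pos_sign : nat -> bool := fun=> true.

Definition flat_index (w : gword) (c : nat) : int := Ind w pos_sign c.

Definition delta_pm (x n : int) : int := (x == n)%:R - (x == - n)%:R.

Definition flat_writhe (w : gword) (n : int) : int :=
  \sum_(c <- labels w) delta_pm (flat_index w c) n.

Lemma delta_pm0 n : delta_pm 0 n = 0.
Proof. by rewrite /delta_pm eq_sym -eqr_oppLR oppr0 eq_sym subrr. Qed.

Lemma delta_pmN x n : delta_pm (- x) n = - delta_pm x n.
Proof. by rewrite /delta_pm eqr_oppLR [(- x == - n)]eqr_opp opprB. Qed.

Lemma ind_contribE w s c d : ind_contrib w s c d =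
  wsign s d * cross_sign (right_arc (tailpos w c) (headpos w c) (tailpos w d))
                         (right_arc (tailpos w c) (headpos w c) (headpos w d)).
Proof.
rewrite /ind_contrib /right_of -/(right_arc _ _ _) -/(right_arc _ _ (headpos w d)).
by rewrite /cross_sign; do 2 case: right_arc; rewrite /= ?mulr1 ?mulrN1 ?mulr0.
Qed.

Lemma flat_contribE w c d : ind_contrib w pos_sign c d =
  cross_sign (right_arc (tailpos w c) (headpos w c) (tailpos w d))
             (right_arc (tailpos w c) (headpos w c) (headpos w d)).
Proof. by rewrite ind_contribE mul1r. Qed.

Lemma mem_labels w c : (c \in labels w) = (c \in map fst w).
Proof. exact: mem_undup. Qed.

Lemma labels_uniq w : uniq (labels w).
Proof. exact: undup_uniq. Qed.

Lemma mem_labels_letter w e : e \in w -> e.1 \in labels w.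
Proof. by move=> ew; rewrite mem_labels map_f. Qed.

Lemma perm_labels x y : x =i y -> perm_eq (labels x) (labels y).
Proof.
move=> xy; apply: uniq_perm; rewrite ?labels_uniq // => c.
by rewrite !mem_labels; apply/mapP/mapP => -[e ? ->]; exists e; rewrite ?xy // -xy.
Qed.

Lemma gauss_wf_mem w c b : gauss_wf w -> c \in labels w -> (c, b) \in w.
Proof.
case/andP=> _ /allP wf_pair; rewrite mem_labels => /mapP [[c' b'] cw /= ->].
by case: (eqVneq b b') => [-> //|]; move: (wf_pair _ cw); case: b b' {cw} => [] [].
Qed.

Lemma gauss_wf_perm x y : perm_eq x y -> gauss_wf x = gauss_wf y.
Proof.
move=> xy; rewrite /gauss_wf (perm_uniq xy) (perm_all _ xy).
by congr (_ && _); apply: eq_all => e; rewrite (perm_mem xy).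
Qed.

Lemma index_inj_mem (w : gword) x y : x \in w -> index x w = index y w -> x = y.
Proof.
by move=> xw ixy; rewrite -(nth_index x xw) ixy nth_index // -index_mem -ixy index_mem.
Qed.

Lemma flat_index_eq x y c : perm_eq (labels x) (labels y) ->
  {in labels x, forall d, d != c ->
     ind_contrib x pos_sign c d = ind_contrib y pos_sign c d} ->
  flat_index x c = flat_index y c.
Proof.
move=> xy eq_contrib; rewrite /flat_index /Ind -(perm_big _ xy) /=.
rewrite big_seq_cond [in RHS]big_seq_cond.
by apply: eq_bigr => d /andP [? ?]; rewrite eq_contrib.
Qed.

Lemma flat_writhe_eq x y : perm_eq (labels x) (labels y) ->
  {in labels x, forall c, flat_index x c = flat_index y c} ->
  flat_writhe x =1 flat_writhe y.
Proof.
move=> xy eq_index n; rewrite /flat_writhe -(perm_big _ xy) /=.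
by apply: eq_big_seq => c ?; rewrite eq_index.
Qed.

Section FlatDiagram.
Variable s : nat -> bool.

Definition flat_letter (e : letter) : letter := (e.1, if s e.1 then e.2 else ~~ e.2).

Lemma flat_letterK : involutive flat_letter.
Proof. by case=> c b; rewrite /flat_letter /=; case: (s c); rewrite ?negbK. Qed.

Lemma flat_letter_inj : injective flat_letter.
Proof. exact: inv_inj flat_letterK. Qed.

Lemma labels_flat w : labels (flat_of w s) = labels w.
Proof. by rewrite /labels -map_comp. Qed.

Lemma tailpos_flat w c : tailpos (flat_of w s) c = index (c, s c) w.
Proof.
rewrite /tailpos -/(map flat_letter w).
have -> : (c, true) = flat_letter (c, s c) by rewrite /flat_letter /=; case: (s c).
by rewrite index_map //; apply: flat_letter_inj.
Qed.

Lemma headpos_flat w c : headpos (flat_of w s) c = index (c, ~~ s c) w.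
Proof.
rewrite /headpos -/(map flat_letter w).
have -> : (c, false) = flat_letter (c, ~~ s c) by rewrite /flat_letter /=; case: (s c).
by rewrite index_map //; apply: flat_letter_inj.
Qed.

Lemma gauss_wf_flat w : gauss_wf w -> gauss_wf (flat_of w s).
Proof.
case/andP=> w_uniq /allP wf_pair; apply/andP; split.
  by rewrite (map_inj_uniq flat_letter_inj).
apply/allP => _ /mapP [e ew ->].
have -> : ((flat_letter e).1, ~~ (flat_letter e).2) = flat_letter (e.1, ~~ e.2).
  by rewrite /flat_letter /=; case: (s e.1).
exact/map_f/wf_pair.
Qed.
End FlatDiagram.

Lemma wsignE s c : wsign s c = if s c then 1 else -1.
Proof. by []. Qed.

(* Reversing the arrow [c] exchanges its two sides; reversing [d] exchanges
   the roles of its tail and head.  Either way the crossing sign flips. *)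
Lemma cross_sign_reorient (bc bd : bool) tc hc td hd :
  tc != hc -> td != tc -> td != hc -> hd != tc -> hd != hc ->
  let arc := right_arc (if bc then tc else hc) (if bc then hc else tc) in
  cross_sign (arc (if bd then td else hd)) (arc (if bd then hd else td)) =
  (if bc then 1 else -1) * ((if bd then 1 else -1) *
     cross_sign (right_arc tc hc td) (right_arc tc hc hd)).
Proof.
move=> tch tdc tdh hdc hdh arc; rewrite {}/arc.
case: bc; case: bd; rewrite /= ?mul1r ?mulN1r ?opprK //.
- by rewrite cross_signC.
- by rewrite (@right_arc_rev tc hc td) // (@right_arc_rev tc hc hd) // cross_signNN.
- by rewrite (@right_arc_rev tc hc td) // (@right_arc_rev tc hc hd) // cross_signNN cross_signC opprK.
Qed.

Section SignedDiagram.
Variables (w : gword) (s : nat -> bool).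
Hypothesis w_wf : gauss_wf w.

Lemma index_letter_neq c b c' b' : c \in labels w -> (c, b) != (c', b') ->
  index (c, b) w != index (c', b') w.
Proof.
by move=> cw; apply: contraNneq => /(index_inj_mem (gauss_wf_mem b w_wf cw)) ->.
Qed.

Lemma flat_contrib_flat c d : c \in labels w -> d \in labels w -> d != c ->
  ind_contrib (flat_of w s) pos_sign c d = wsign s c * ind_contrib w s c d.
Proof.
move=> cw dw dc.
have neq_dc b b' : (d, b) != (c, b') by rewrite xpair_eqE (negbTE dc).
have neq_cc b : (c, b) != (c, ~~ b) by rewrite xpair_eqE eqxx; case: b.
rewrite flat_contribE ind_contribE !tailpos_flat !headpos_flat /tailpos /headpos.
have index_if x b : index (x, b) w = if b then index (x, true) w else index (x, false) w.
  by case: b.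
rewrite (index_if c (s c)) (index_if c (~~ s c)) (index_if d (s d)) (index_if d (~~ s d)).
rewrite !if_neg !wsignE.
by apply: cross_sign_reorient; apply: index_letter_neq.
Qed.

Lemma flat_index_flat c : c \in labels w ->
  flat_index (flat_of w s) c = wsign s c * Ind w s c.
Proof.
move=> cw; rewrite /flat_index /Ind labels_flat mulr_sumr.
rewrite big_seq_cond [in RHS]big_seq_cond; apply: eq_bigr => d /andP [dw dc].
exact: flat_contrib_flat.
Qed.

Lemma writhe_polyB n : n != 0 ->
  writhe_poly w s n - writhe_poly w s (- n) = flat_writhe (flat_of w s) n.
Proof.
move=> n0; rewrite /writhe_poly (negbTE n0) oppr_eq0 (negbTE n0).
rewrite /flat_writhe labels_flat !(big_mkcond (fun c => Ind w s c == _)) -sumrB.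
apply: eq_big_seq => c cw /=; rewrite flat_index_flat // wsignE.
case: (s c); rewrite ?mul1r ?mulN1r ?delta_pmN /delta_pm.
  by do 2 case: eqP; rewrite ?subr0 ?sub0r.
by do 2 case: eqP; rewrite ?subr0 ?sub0r ?opprK ?opprB.
Qed.
End SignedDiagram.

Lemma index_rot1 (e : letter) u z : uniq (e :: u) -> z \in e :: u ->
  index z (rot 1 (e :: u)) =
  if index z (e :: u) == 0%N then (size (e :: u)).-1 else (index z (e :: u)).-1.
Proof.
case/andP=> eu _; rewrite rot1_cons -cats1 index_cat /= inE.
case: (eqVneq z e) => [->|ze] /=; first by rewrite (negbTE eu) addn0.
by move=> ->.
Qed.

Lemma flat_writhe_rot1 w : gauss_wf w -> flat_writhe w =1 flat_writhe (rot 1 w).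
Proof.
case: w => [//|e u] wf.
set w := e :: u.
have w_uniq : uniq w by case/andP: wf.
have mem_w x b : x \in labels w -> (x, b) \in w by apply: gauss_wf_mem.
have labels_rot : perm_eq (labels w) (labels (rot 1 w)).
  by apply: perm_labels => z; rewrite mem_rot.
apply: flat_writhe_eq => // c cw; apply: flat_index_eq => // d dw dc.
have neq_dc b b' : (d, b) != (c, b') by rewrite xpair_eqE (negbTE dc).
have neq_cc : (c, true) != (c, false) by rewrite xpair_eqE eqxx.
have index_lt x b : x \in labels w -> (index (x, b) w < size w)%N.
  by move=> xw; rewrite index_mem mem_w.
rewrite !flat_contribE /tailpos /headpos !index_rot1 ?mem_w //.
by rewrite !(@right_arc_rot (size w)) ?index_lt //; apply: index_letter_neq.
Qed.

Section Relabel.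
Variable f : nat -> nat.
Hypothesis f_inj : injective f.

Let relabel (e : letter) : letter := (f e.1, e.2).

Let relabel_inj : injective relabel.
Proof. by case=> a b [c d] [] /f_inj -> ->. Qed.

Lemma labels_relabel w : labels (map relabel w) = map f (labels w).
Proof.
rewrite /labels -(undup_map_inj f_inj); congr undup.
by rewrite -!map_comp.
Qed.

Lemma index_relabel w c b : index (f c, b) (map relabel w) = index (c, b) w.
Proof. by rewrite -[(f c, b)]/(relabel (c, b)) index_map. Qed.

Lemma gauss_wf_relabel w : gauss_wf (map relabel w) = gauss_wf w.
Proof.
rewrite /gauss_wf (map_inj_uniq relabel_inj) all_map; congr (_ && _).
by apply: eq_all => -[c b]; rewrite /= -[(f c, ~~ b)]/(relabel (c, ~~ b)) mem_map.
Qed.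

Lemma flat_writhe_relabel w : flat_writhe w =1 flat_writhe (map relabel w).
Proof.
move=> n; rewrite /flat_writhe labels_relabel big_map; apply: eq_bigr => c _.
rewrite /flat_index /Ind labels_relabel big_map.
apply: congr2 => //; apply: eq_big => [d|d _]; first by rewrite inj_eq.
by rewrite !flat_contribE /tailpos /headpos !index_relabel.
Qed.
End Relabel.

Definition shift_from (m k i : nat) : nat := if (i < m)%N then i else (i + k)%N.

Lemma shift_from_mono m k : {mono shift_from m k : x y / (x < y)%N}.
Proof. by move=> x y; rewrite /shift_from; repeat case: ifP => ?; lia. Qed.

Lemma index_insert (u X v : gword) x : x \notin X ->
  index x (u ++ X ++ v) = shift_from (size u) (size X) (index x (u ++ v)).
Proof.
move=> xX; rewrite !index_cat (negbTE xX) /shift_from.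
case: ifP => xu; first by rewrite index_mem xu.
by move: (index x v) (size u) (size X) => i m k; case: ifP => ?; lia.
Qed.

Lemma index_cat_cons (u v : gword) x : x \notin u -> index x (u ++ x :: v) = size u.
Proof. by move=> xu; rewrite index_cat (negbTE xu) /= eqxx addn0. Qed.

Lemma notin_letters (X : gword) c b : c \notin map fst X -> (c, b) \notin X.
Proof. by apply: contra => cX; apply/mapP; exists (c, b). Qed.

Lemma flat_contrib_insert u X v c d : c \notin map fst X -> d \notin map fst X ->
  ind_contrib (u ++ X ++ v) pos_sign c d = ind_contrib (u ++ v) pos_sign c d.
Proof.
move=> cX dX; rewrite !flat_contribE /tailpos /headpos !index_insert ?notin_letters //.
by rewrite !right_arc_mono // => x y _ _; rewrite shift_from_mono.
Qed.

Lemma gauss_wf_cat_fresh (X v : gword) : uniq X ->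
  {in X, forall e, (e.1, ~~ e.2) \in X} -> {in X, forall e, e.1 \notin map fst v} ->
  gauss_wf (X ++ v) = gauss_wf v.
Proof.
move=> X_uniq X_closed X_fresh; rewrite /gauss_wf cat_uniq X_uniq all_cat /=.
have -> : ~~ has (mem X) v.
  apply/hasPn => e ev; apply/negP => eX.
  by move: (X_fresh _ eX); rewrite (map_f fst ev).
have -> : all (fun e : letter => (e.1, ~~ e.2) \in X ++ v) X.
  by apply/allP => e eX; rewrite mem_cat X_closed.
congr (_ && _); apply: eq_in_all => e ev; rewrite /= mem_cat.
case eX: ((e.1, ~~ e.2) \in X) => //=.
by move: (X_fresh _ eX); rewrite /= (map_f fst ev).
Qed.

Lemma fresh_labels w a c : fresh a w -> c \in labels w -> c != a.
Proof. by rewrite mem_labels => aw; apply: contraTneq => ->. Qed.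

Section R1.
Variables (u v : gword) (a : nat) (b : bool).
Hypothesis a_fresh : fresh a (u ++ v).
Let X : gword := [:: (a, b); (a, ~~ b)].
Let W := u ++ X ++ v.

Let a_notin_u : a \notin map fst u.
Proof. by move: a_fresh; rewrite /fresh map_cat mem_cat negb_or => /andP []. Qed.

Let old_notin_X c : c \in labels (u ++ v) -> c \notin map fst X.
Proof. by move=> cw; rewrite /= !inE (negbTE (fresh_labels a_fresh cw)). Qed.

Lemma gauss_wf_R1 : gauss_wf W = gauss_wf (u ++ v).
Proof.
rewrite /W (gauss_wf_perm (permEl (perm_catCA u X v))) (@gauss_wf_cat_fresh X) //.
- by rewrite /X /= inE andbT xpair_eqE eqxx; case: b.
- by move=> e; rewrite /X !inE => /orP [] /eqP -> /=; rewrite ?negbK eqxx ?orbT.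
- by move=> e; rewrite /X !inE => /orP [] /eqP -> /=.
Qed.

Let labels_R1 : perm_eq (labels W) (a :: labels (u ++ v)).
Proof.
apply: uniq_perm; rewrite /= ?labels_uniq ?mem_labels ?andbT // => c.
rewrite /W inE !mem_labels !map_cat !mem_cat /= !inE.
by case: (c == a); rewrite ?orbT //= orbF.
Qed.

Let index_new_tail : index (a, b) W = size u.
Proof. by rewrite /W index_cat_cons // (notin_letters _ a_notin_u). Qed.

Let index_new_head : index (a, ~~ b) W = (size u).+1.
Proof.
rewrite /W (_ : u ++ X ++ v = (u ++ [:: (a, b)]) ++ (a, ~~ b) :: v); last by rewrite -catA.
rewrite index_cat_cons ?size_cat ?addn1 // mem_cat negb_or (notin_letters _ a_notin_u) /=.
by rewrite inE xpair_eqE eqxx; case: b.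
Qed.

Let index_old c b' : c \in labels (u ++ v) ->
  (index (c, b') W != size u) && (index (c, b') W != (size u).+1).
Proof.
move=> cw; rewrite /W index_insert ?notin_letters ?old_notin_X // /shift_from /=.
by move: (index _ _) (size u) => i m; case: ifP => ?; apply/andP; split; apply/eqP; lia.
Qed.

(* The two endpoints of the new chord are adjacent: no other endpoint
   separates them, and its short arc contains no other endpoint. *)
Let flat_contrib_to_new c : c \in labels (u ++ v) -> ind_contrib W pos_sign c a = 0.
Proof.
move=> cw; rewrite flat_contribE /tailpos /headpos.
case/andP: (index_old true cw) => ? ?; case/andP: (index_old false cw) => ? ?.
case: b index_new_tail index_new_head => /= -> ->.
  by rewrite right_arc_succ // cross_sign_id.
by rewrite right_arc_succ // cross_sign_id.
Qed.

Let flat_contrib_from_new d : d \in labels (u ++ v) -> ind_contrib W pos_sign a d = 0.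
Proof.
move=> dw; rewrite flat_contribE /tailpos /headpos.
case/andP: (index_old true dw) => ? ?; case/andP: (index_old false dw) => ? ?.
case: b index_new_tail index_new_head => /= -> ->.
  by rewrite !right_arc_short.
by rewrite !right_arc_short_rev.
Qed.

Lemma flat_writhe_R1 : flat_writhe W =1 flat_writhe (u ++ v).
Proof.
move=> n; rewrite /flat_writhe (perm_big _ labels_R1) big_cons.
have -> : flat_index W a = 0.
  rewrite /flat_index /Ind (perm_big _ labels_R1) big_cons eqxx /=.
  by rewrite big_seq_cond big1 // => d /andP [dw _]; apply: flat_contrib_from_new.
rewrite /= delta_pm0 add0r; apply: eq_big_seq => c cw; congr delta_pm.
rewrite /flat_index /Ind (perm_big _ labels_R1) big_cons eq_sym.
rewrite (fresh_labels a_fresh cw) /= flat_contrib_to_new // add0r.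
rewrite big_seq_cond [in RHS]big_seq_cond; apply: eq_bigr => d /andP [dw _].
by apply: flat_contrib_insert; apply: old_notin_X.
Qed.
End R1.

Ltac decide_ltn := repeat match goal with |- context [(?x < ?y)%N] =>
  first [ rewrite (_ : (x < y)%N = true); last by lia
        | rewrite (_ : (x < y)%N = false); last by lia ] end.

Section R2.
Variables (u1 u2 u3 : gword) (a b : nat) (t swap : bool).
Hypothesis a_neq_b : a != b.
Hypothesis a_fresh : fresh a (u1 ++ u2 ++ u3).
Hypothesis b_fresh : fresh b (u1 ++ u2 ++ u3).
Let O := u1 ++ u2 ++ u3.
Let A : gword := [:: (a, t); (b, ~~ t)].
Let B1 : letter := if swap then (b, t) else (a, ~~ t).
Let B2 : letter := if swap then (a, ~~ t) else (b, t).
Let B : gword := if swap then [:: (b, t); (a, ~~ t)] else [:: (a, ~~ t); (b, t)].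
Let W := u1 ++ A ++ u2 ++ B ++ u3.
Let m1 := size u1.
Let m2 := (size u1 + 2 + size u2)%N.

Let b_neq_a : b != a. Proof. by rewrite eq_sym. Qed.

Let B_split : B = [:: B1; B2]. Proof. by rewrite /B /B1 /B2; case: swap. Qed.

Lemma gauss_wf_R2 : gauss_wf W = gauss_wf O.
Proof.
have ab := negbTE a_neq_b; have ba := negbTE b_neq_a.
have W_perm : perm_eq W ((A ++ B) ++ O).
  by apply/permP => p; rewrite /W /O !count_cat; lia.
rewrite (gauss_wf_perm W_perm) (@gauss_wf_cat_fresh (A ++ B)) //.
- by rewrite /A /B; case: swap; case: t;
    rewrite /= !inE !xpair_eqE ?ab ?ba ?eqxx /= ?andbF ?andbT.
- by move=> e; rewrite /A /B; case: swap; case: t; rewrite /= !inE => /or4P [] /eqP -> /=;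
    rewrite !xpair_eqE ?ab ?ba ?eqxx /= ?andbF ?andbT ?orbT.
- by move=> e; rewrite /A /B; case: swap; case: t; rewrite /= !inE => /or4P [] /eqP -> /=.
Qed.

Let new_notin_u1 x c : x \in [:: a; b] -> (x, c) \notin u1.
Proof.
rewrite !inE => /orP [] /eqP ->; apply: notin_letters; [move: a_fresh | move: b_fresh];
by rewrite /fresh !map_cat !mem_cat !negb_or => /and3P [].
Qed.

Let new_notin_u2 x c : x \in [:: a; b] -> (x, c) \notin u2.
Proof.
rewrite !inE => /orP [] /eqP ->; apply: notin_letters; [move: a_fresh | move: b_fresh];
by rewrite /fresh !map_cat !mem_cat !negb_or => /and3P [].
Qed.

Let index_A1 : index (a, t) W = m1.
Proof. by rewrite /W index_cat_cons // new_notin_u1 // inE eqxx. Qed.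

Let index_A2 : index (b, ~~ t) W = m1.+1.
Proof.
rewrite (_ : W = (u1 ++ [:: (a, t)]) ++ (b, ~~ t) :: u2 ++ B ++ u3); last first.
  by rewrite /W -catA.
rewrite index_cat_cons ?size_cat ?addn1 // mem_cat negb_or new_notin_u1 ?inE ?eqxx ?orbT //=.
by rewrite xpair_eqE (negbTE b_neq_a).
Qed.

Let index_B1 : index B1 W = m2.
Proof.
have ab := negbTE a_neq_b; have ba := negbTE b_neq_a.
rewrite (_ : W = (u1 ++ A ++ u2) ++ B1 :: B2 :: u3); last by rewrite /W B_split -!catA.
rewrite index_cat_cons; first by rewrite !size_cat /m2 /=; lia.
rewrite !mem_cat !negb_or /B1; case: swap; case: t;
by rewrite new_notin_u1 ?new_notin_u2 ?inE ?eqxx ?orbT //= !xpair_eqE ?ab ?ba ?eqxx /= ?andbF.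
Qed.

Let index_B2 : index B2 W = m2.+1.
Proof.
have ab := negbTE a_neq_b; have ba := negbTE b_neq_a.
rewrite (_ : W = (u1 ++ A ++ u2 ++ [:: B1]) ++ B2 :: u3); last by rewrite /W B_split -!catA.
rewrite index_cat_cons; first by rewrite !size_cat /m2 /=; lia.
rewrite !mem_cat !negb_or /B1 /B2; case: swap; case: t;
by rewrite new_notin_u1 ?new_notin_u2 ?inE ?eqxx ?orbT //= !xpair_eqE ?ab ?ba ?eqxx /= ?andbF.
Qed.

Let ends_new :
  [/\ tailpos W a = (if t then m1 else if swap then m2.+1 else m2),
      headpos W a = (if t then (if swap then m2.+1 else m2) else m1),
      tailpos W b = (if t then (if swap then m2 else m2.+1) else m1.+1)
    & headpos W b = (if t then m1.+1 else if swap then m2 else m2.+1)].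
Proof.
move: index_A1 index_A2 index_B1 index_B2; rewrite /B1 /B2 /tailpos /headpos.
by case: swap; case: t => /= -> -> -> ->.
Qed.

Let old_notin_new c : c \in labels O -> c \notin [:: a; b].
Proof.
by move=> cO; rewrite !inE negb_or (fresh_labels a_fresh cO) (fresh_labels b_fresh cO).
Qed.

Let index_old c c' : c \in labels O ->
  index (c, c') W = shift_from m1 2 (shift_from (size u1 + size u2) 2 (index (c, c') O)).
Proof.
move=> /old_notin_new; rewrite !inE negb_or => /andP [ca cb].
have notin_new : (c, c') \notin A /\ (c, c') \notin B.
  by rewrite /A /B; case: swap; rewrite !inE !xpair_eqE (negbTE ca) (negbTE cb).
case: notin_new => nA nB.
rewrite /W index_insert //.
have -> : u1 ++ u2 ++ B ++ u3 = (u1 ++ u2) ++ B ++ u3 by rewrite catA.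
by rewrite (@index_insert (u1 ++ u2)) // size_cat -catA B_split.
Qed.

Let index_old_avoid c c' : c \in labels O -> let p := index (c, c') W in
  [&& p != m1, p != m1.+1, p != m2 & p != m2.+1].
Proof.
move=> cO /=; rewrite index_old // /m2 /m1.
move: (index (c, c') O) (size u1) (size u2) => i s1 s2.
by rewrite /shift_from; case: (ltnP i (s1 + s2)) => ? /=; case: ltnP => ?;
  apply/and4P; split; apply/eqP; lia.
Qed.

Let flat_contrib_old c d : c \in labels O -> d \in labels O ->
  ind_contrib W pos_sign c d = ind_contrib O pos_sign c d.
Proof.
move=> cO dO; rewrite !flat_contribE /tailpos /headpos !index_old //.
by rewrite !right_arc_mono // => x y _ _; rewrite !shift_from_mono.
Qed.

(* The chord [b] runs antiparallel to [a], with each endpoint adjacent to one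
   of [a]: every other chord sees [a] and [b] with opposite signs, and they
   see every other chord with opposite signs. *)
Let flat_contrib_to_new c : c \in labels O ->
  ind_contrib W pos_sign c a + ind_contrib W pos_sign c b = 0.
Proof.
move=> cO; case: ends_new => ta ha tb hb; rewrite !flat_contribE ta ha tb hb.
case/and4P: (index_old_avoid true cO) => ? ? ? ?.
case/and4P: (index_old_avoid false cO) => ? ? ? ?.
rewrite /tailpos /headpos.
by case: t; case: swap; rewrite ?(@right_arc_succ _ _ m1) ?(@right_arc_succ _ _ m2) //
  cross_signC addrC subrr.
Qed.

Let flat_contrib_from_new d : d \in labels O ->
  ind_contrib W pos_sign b d = - ind_contrib W pos_sign a d.
Proof.
move=> dO; case: ends_new => ta ha tb hb; rewrite !flat_contribE ta ha tb hb.
move: (index_old_avoid true dO) (index_old_avoid false dO).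
rewrite /tailpos /headpos /=.
move: (index (d, true) W) (index (d, false) W) => p q /and4P [? ? ? ?] /and4P [? ? ? ?].
rewrite -cross_signNN /right_arc; congr cross_sign;
by case: t; case: swap; repeat case: ifP => ?; lia.
Qed.

Let flat_contrib_new : ind_contrib W pos_sign a b = - ind_contrib W pos_sign b a.
Proof.
case: ends_new => ta ha tb hb.
rewrite !flat_contribE ta ha tb hb /cross_sign /right_arc /m1 /m2.
by move: (size u1) (size u2) => x y; case: t; case: swap; decide_ltn.
Qed.

Let labels_R2 : perm_eq (labels W) (a :: b :: labels O).
Proof.
apply: uniq_perm; first exact: labels_uniq.
  by rewrite /= inE negb_or a_neq_b labels_uniq !mem_labels andbT; exact/andP.
move=> c; rewrite /W /A /B /O !inE !mem_labels !map_cat !mem_cat /=.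
by case: swap; rewrite /= !inE; case: (c == a); case: (c == b); rewrite /= ?orbT ?orbF.
Qed.

Let flat_index_old c : c \in labels O -> flat_index W c = flat_index O c.
Proof.
move=> cO; rewrite /flat_index /Ind (perm_big _ labels_R2) !big_cons.
rewrite eq_sym (fresh_labels a_fresh cO) eq_sym (fresh_labels b_fresh cO) /=.
rewrite addrA flat_contrib_to_new // add0r big_seq_cond [in RHS]big_seq_cond.
by apply: eq_bigr => d /andP [dO _]; apply: flat_contrib_old.
Qed.

Let flat_index_new : flat_index W b = - flat_index W a.
Proof.
rewrite /flat_index /Ind (perm_big _ labels_R2) [in RHS](perm_big _ labels_R2).
rewrite !big_cons /= (negbTE a_neq_b) (negbTE b_neq_a) !eqxx /= opprD flat_contrib_new opprK.
congr (_ + _); rewrite -sumrN big_seq_cond [in RHS]big_seq_cond.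
apply: eq_big => [d|d /andP [dO _]]; last by rewrite flat_contrib_from_new.
by case dO: (d \in labels O); rewrite //= (fresh_labels b_fresh dO) (fresh_labels a_fresh dO).
Qed.

Lemma flat_writhe_R2 : flat_writhe W =1 flat_writhe O.
Proof.
move=> n; rewrite /flat_writhe (perm_big _ labels_R2) !big_cons /=.
rewrite addrA flat_index_new delta_pmN subrr add0r.
by apply: eq_big_seq => c cO; rewrite flat_index_old.
Qed.
End R2.

Definition swap_at (m k : nat) : nat :=
  if k == m then m.+1 else if k == m.+1 then m else k.

Lemma swap_at_mono m x y : ~~ ((x == m) && (y == m.+1) || (x == m.+1) && (y == m)) ->
  (swap_at m x < swap_at m y)%N = (x < y)%N.
Proof. by rewrite /swap_at => ?; repeat case: ifP => /eqP ?; lia. Qed.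

Lemma index_swap (u v : gword) (y z x : letter) : y != z ->
  index x (u ++ z :: y :: v) = swap_at (size u) (index x (u ++ y :: z :: v)).
Proof.
move=> yz; rewrite !index_cat; case: ifP => xu.
  have : (index x u < size u)%N by rewrite index_mem.
  by rewrite /swap_at; move: (index x u) (size u) => i m ?; repeat case: ifP => /eqP ?; lia.
rewrite /= /swap_at; case ey: (y == x); case ez: (z == x) => /=.
- by move: yz; rewrite (eqP ey) (eqP ez) eqxx.
all: by move: (index x v) (size u) => i m; repeat case: ifP => /eqP ?; lia.
Qed.

Lemma index_uniq_cat_cons (s1 s2 : gword) x :
  uniq (s1 ++ x :: s2) -> index x (s1 ++ x :: s2) = size s1.
Proof.
rewrite cat_uniq /= => /and3P [_ xs _]; apply: index_cat_cons.
by apply: contra xs => xs1; rewrite /= xs1.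
Qed.

(* Exchanging two adjacent endpoints only changes the relative order of
   those two positions, which matters only between their own chords. *)
Lemma flat_contrib_swap (u v : gword) (y z : letter) c d :
  uniq (u ++ y :: z :: v) ->
  (forall b, (c, b) \in u ++ y :: z :: v) -> (forall b, (d, b) \in u ++ y :: z :: v) ->
  y.1 != z.1 -> ~~ pair_is y z c d ->
  ind_contrib (u ++ z :: y :: v) pos_sign c d = ind_contrib (u ++ y :: z :: v) pos_sign c d.
Proof.
set w := u ++ y :: z :: v => w_uniq cw dw yz not_pair.
have yz' : y != z by apply: contraNneq yz => ->.
have index_y : index y w = size u by rewrite index_uniq_cat_cons.
have index_z : index z w = (size u).+1.
  rewrite (_ : w = (u ++ [:: y]) ++ z :: v) ?index_uniq_cat_cons ?size_cat ?addn1 //.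
    by rewrite -catA.
  by rewrite -catA.
have not_adjacent e f : e.1 \in [:: c; d] -> f.1 \in [:: c; d] -> e \in w -> f \in w ->
    ~~ ((index e w == size u) && (index f w == (size u).+1) ||
        (index e w == (size u).+1) && (index f w == size u)).
  move=> ecd fcd ew fw; apply/negP => /orP [] /andP [/eqP ie /eqP jf].
  - have ey : e = y by apply: (index_inj_mem ew); rewrite ie index_y.
    have fz : f = z by apply: (index_inj_mem fw); rewrite jf index_z.
    subst; move: ecd fcd not_pair yz; rewrite /pair_is !inE.
    by case/orP => /eqP ->; case/orP => /eqP ->; rewrite ?eqxx //= ?orbT.
  - have ez : e = z by apply: (index_inj_mem ew); rewrite ie index_z.
    have fy : f = y by apply: (index_inj_mem fw); rewrite jf index_y.
    subst; move: ecd fcd not_pair yz; rewrite /pair_is !inE.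
    by case/orP => /eqP ->; case/orP => /eqP ->; rewrite ?eqxx //= ?orbT.
rewrite !flat_contribE /tailpos /headpos !(@index_swap u v y z _ yz') -/w.
have mem_cd b x : x \in [:: c; d] -> (x, b) \in w by rewrite !inE => /orP [] /eqP ->.
congr cross_sign; apply: right_arc_mono => x0 y0;
  rewrite !inE => /or3P [] /eqP -> /or3P [] /eqP ->;
  by apply: swap_at_mono; apply: not_adjacent; rewrite ?mem_cd ?inE ?eqxx ?orbT.
Qed.

(* A finite check over the labellings and orientations of the six endpoints
   allowed by the realizability condition of [tri_ok]. *)
Lemma flat_contrib_triangle (W W' : gword) (x12 x13 x23 : nat)
    (p1 p2 q1 q2 r1 r2 : letter) (pos : nat -> nat) :
  uniq [:: x12; x13; x23] ->
  pair_is p1 p2 x12 x13 -> pair_is q1 q2 x12 x23 -> pair_is r1 r2 x13 x23 ->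
  (let o1 := p1.1 == x12 in
   let o2 := q1.1 == x12 in
   let o3 := r1.1 == x13 in
   let s12 := flag_in x12 p1 p2 in
   let s13 := flag_in x13 p1 p2 in
   let s23 := flag_in x23 q1 q2 in
   ((o1 == o3) == (s12 == s23)) /\ ((o2 == o3) == (s12 == s13))) ->
  uniq [:: p1; p2; q1; q2; r1; r2] ->
  (forall i j k, right_arc (pos i) (pos j) (pos k) = right_arc i j k) ->
  (forall k, (k < 6)%N -> index (nth p1 [:: p1; p2; q1; q2; r1; r2] k) W = pos k) ->
  (forall k, (k < 6)%N -> index (nth p2 [:: p2; p1; q2; q1; r2; r1] k) W' = pos k) ->
  forall c, c \in [:: x12; x13; x23] ->
  \sum_(d <- [:: x12; x13; x23] | d != c) ind_contrib W' pos_sign c d =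
  \sum_(d <- [:: x12; x13; x23] | d != c) ind_contrib W pos_sign c d.
Proof.
rewrite /= !inE !negb_or andbT => /andP [/andP [n12 n13] n23].
have E12 := negbTE n12; have E13 := negbTE n13; have E23 := negbTE n23.
have E21 : (x13 == x12) = false by rewrite eq_sym.
have E31 : (x23 == x12) = false by rewrite eq_sym.
have E32 : (x23 == x13) = false by rewrite eq_sym.
case: p1 p2 q1 q2 r1 r2 => [l1 f1] [l2 f2] [l3 f3] [l4 f4] [l5 f5] [l6 f6].
rewrite /pair_is /=.
case/orP => /andP [/eqP -> /eqP ->]; case/orP => /andP [/eqP -> /eqP ->];
case/orP => /andP [/eqP -> /eqP ->];
rewrite /flag_in /= ?eqxx ?E12 ?E13 ?E23 ?E21 ?E31 ?E32 /=;
case: f1; case: f2; case: f3; case: f4; case: f5; case: f6;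
rewrite /= ?eqxx ?E12 ?E13 ?E23 ?E21 ?E31 ?E32 /=;
move=> [? ?]; try discriminate;
rewrite ?inE ?xpair_eqE /= ?eqxx ?E12 ?E13 ?E23 ?E21 ?E31 ?E32 /= => ?; try discriminate.
all: move=> pos_arc iW iW' c.
all: move: (iW 0%N isT) (iW 1%N isT) (iW 2%N isT) (iW 3%N isT) (iW 4%N isT) (iW 5%N isT).
all: move: (iW' 0%N isT) (iW' 1%N isT) (iW' 2%N isT) (iW' 3%N isT) (iW' 4%N isT) (iW' 5%N isT).
all: move=> /= j2 j1 j4 j3 j6 j5 i1 i2 i3 i4 i5 i6.
all: by rewrite !inE => /or3P [] /eqP ->; rewrite !big_cons !big_nil /=
  ?eqxx ?E12 ?E13 ?E23 ?E21 ?E31 ?E32 /= !flat_contribE /tailpos /headpos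
  ?i1 ?i2 ?i3 ?i4 ?i5 ?i6 ?j1 ?j2 ?j3 ?j4 ?j5 ?j6 !pos_arc.
Qed.

Definition block_pos (m1 m2 m3 k : nat) : nat :=
  (if k < 2 then m1 + k
   else if k < 4 then m1 + 2 + m2 + (k - 2)
   else m1 + 2 + m2 + 2 + m3 + (k - 4))%N.

Lemma block_pos_mono m1 m2 m3 : {mono block_pos m1 m2 m3 : x y / (x < y)%N}.
Proof. by move=> x y; rewrite /block_pos; repeat case: ifP => ?; lia. Qed.

Lemma index_blocks (u1 u2 u3 u4 : gword) (y1 y2 y3 y4 y5 y6 : letter) :
  let w := u1 ++ [:: y1; y2] ++ u2 ++ [:: y3; y4] ++ u3 ++ [:: y5; y6] ++ u4 in
  uniq w -> forall k, (k < 6)%N ->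
  index (nth y1 [:: y1; y2; y3; y4; y5; y6] k) w = block_pos (size u1) (size u2) (size u3) k.
Proof.
move=> w w_uniq k.
have index_at s1 s2 x : s1 ++ x :: s2 = w -> index x w = size s1.
  by move=> ws; rewrite -ws index_uniq_cat_cons // ws.
rewrite /block_pos; do 6?[case: k => [|k]] => //= _.
- rewrite (index_at u1 (y2 :: u2 ++ [:: y3; y4] ++ u3 ++ [:: y5; y6] ++ u4) y1) //.
  by rewrite addn0.
- rewrite (index_at (u1 ++ [:: y1]) (u2 ++ [:: y3; y4] ++ u3 ++ [:: y5; y6] ++ u4) y2).
    by rewrite size_cat addn1.
  by rewrite -catA.
- rewrite (index_at (u1 ++ [:: y1; y2] ++ u2) (y4 :: u3 ++ [:: y5; y6] ++ u4) y3).
    by rewrite !size_cat /=; lia.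
  by rewrite -!catA.
- rewrite (index_at (u1 ++ [:: y1; y2] ++ u2 ++ [:: y3]) (u3 ++ [:: y5; y6] ++ u4) y4).
    by rewrite !size_cat /=; lia.
  by rewrite -!catA.
- rewrite (index_at (u1 ++ [:: y1; y2] ++ u2 ++ [:: y3; y4] ++ u3) (y6 :: u4) y5).
    by rewrite !size_cat /=; lia.
  by rewrite -!catA.
- rewrite (index_at (u1 ++ [:: y1; y2] ++ u2 ++ [:: y3; y4] ++ u3 ++ [:: y5]) u4 y6).
    by rewrite !size_cat /=; lia.
  by rewrite -!catA.
Qed.

Lemma pair_is_ends (y z : letter) c d : pair_is y z c d -> c != d ->
  [/\ y.1 \in [:: c; d], z.1 \in [:: c; d] & y.1 != z.1].
Proof.
by rewrite /pair_is !inE => /orP [] /andP [/eqP -> /eqP ->] cd;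
  split; rewrite ?eqxx ?orbT // eq_sym.
Qed.

Lemma pair_is_labels (y z : letter) c d : pair_is y z c d ->
  (c \in [:: y.1; z.1]) && (d \in [:: y.1; z.1]).
Proof. by rewrite /pair_is !inE => /orP [] /andP [/eqP -> /eqP ->]; rewrite !eqxx ?orbT. Qed.

Lemma perm_swap2 (u v : gword) y z : perm_eq (u ++ y :: z :: v) (u ++ z :: y :: v).
Proof. by apply/permP => x; rewrite !count_cat /=; lia. Qed.

Section R3.
Variables (u1 u2 u3 u4 : gword) (p1 p2 q1 q2 r1 r2 : letter) (x12 x13 x23 : nat).
Let W := u1 ++ [:: p1; p2] ++ u2 ++ [:: q1; q2] ++ u3 ++ [:: r1; r2] ++ u4.
Let W' := u1 ++ [:: p2; p1] ++ u2 ++ [:: q2; q1] ++ u3 ++ [:: r2; r1] ++ u4.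

Lemma perm_R3 : perm_eq W W'.
Proof. by apply/permP => x; rewrite !count_cat /=; lia. Qed.

Lemma gauss_wf_R3 : gauss_wf W = gauss_wf W'.
Proof. exact: gauss_wf_perm perm_R3. Qed.

Let tri := [:: x12; x13; x23].
Hypothesis tri_uniq : uniq tri.
Hypothesis p_pair : pair_is p1 p2 x12 x13.
Hypothesis q_pair : pair_is q1 q2 x12 x23.
Hypothesis r_pair : pair_is r1 r2 x13 x23.
Hypothesis realizable :
  let o1 := p1.1 == x12 in
  let o2 := q1.1 == x12 in
  let o3 := r1.1 == x13 in
  let s12 := flag_in x12 p1 p2 in
  let s13 := flag_in x13 p1 p2 in
  let s23 := flag_in x23 q1 q2 in
  ((o1 == o3) == (s12 == s23)) /\ ((o2 == o3) == (s12 == s13)).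
Hypothesis W_wf : gauss_wf W.

Let W_uniq : uniq W. Proof. by case/andP: W_wf. Qed.
Let W'_uniq : uniq W'. Proof. by rewrite -(perm_uniq perm_R3). Qed.

Let tri_neq : [/\ x12 != x13, x12 != x23 & x13 != x23].
Proof. by move: tri_uniq; rewrite /= !inE !negb_or andbT => /andP [/andP [-> ->] ->]. Qed.

Let ends_tri (y z : letter) c d : pair_is y z c d -> c \in tri -> d \in tri -> c != d ->
  [/\ y.1 \in tri, z.1 \in tri & y.1 != z.1].
Proof.
move=> /pair_is_ends yz ct dt /yz [yc zc ->].
have cd_tri : {subset [:: c; d] <= tri} by apply/allP; rewrite /= ct dt.
by split=> //; apply: cd_tri.
Qed.

Let not_pair (y z : letter) c d : y.1 \in tri -> z.1 \in tri ->
  ~~ ((c \in tri) && (d \in tri)) -> ~~ pair_is y z c d.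
Proof.
move=> yt zt; apply: contra; rewrite /pair_is.
by case/orP => /andP [/eqP <- /eqP <-]; rewrite yt zt.
Qed.

Let flat_contrib_outside c d : c \in labels W -> d \in labels W ->
  ~~ ((c \in tri) && (d \in tri)) ->
  ind_contrib W' pos_sign c d = ind_contrib W pos_sign c d.
Proof.
move=> cW dW out.
case: tri_neq => n12 n13 n23.
have x12t : x12 \in tri by rewrite mem_head.
have x13t : x13 \in tri by rewrite !inE eqxx orbT.
have x23t : x23 \in tri by rewrite !inE eqxx !orbT.
have [p1t p2t p12] := ends_tri p_pair x12t x13t n12.
have [q1t q2t q12] := ends_tri q_pair x12t x23t n13.
have [r1t r2t r12] := ends_tri r_pair x13t x23t n23.
set W1 := u1 ++ [:: p2; p1] ++ u2 ++ [:: q1; q2] ++ u3 ++ [:: r1; r2] ++ u4.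
set W2 := u1 ++ [:: p2; p1] ++ u2 ++ [:: q2; q1] ++ u3 ++ [:: r1; r2] ++ u4.
have perm_W1 : perm_eq W W1 by exact: perm_swap2.
have perm_W2 : perm_eq W W2.
  apply: perm_trans perm_W1 _.
  by have := perm_swap2 (u1 ++ [:: p2; p1] ++ u2) (u3 ++ [:: r1; r2] ++ u4) q1 q2; rewrite -!catA.
have mem_perm s x b : perm_eq W s -> x \in labels W -> (x, b) \in s.
  by move=> Ws xW; rewrite -(perm_mem Ws) gauss_wf_mem.
have -> : W' = (u1 ++ [:: p2; p1] ++ u2 ++ [:: q2; q1] ++ u3) ++ r2 :: r1 :: u4.
  by rewrite /W' -!catA.
rewrite flat_contrib_swap; first last.
- exact: not_pair.
- by [].
- by move=> b; rewrite -!catA; apply: mem_perm.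
- by move=> b; rewrite -!catA; apply: mem_perm.
- by rewrite -!catA -(perm_uniq perm_W2).
have -> : (u1 ++ [:: p2; p1] ++ u2 ++ [:: q2; q1] ++ u3) ++ [:: r1, r2 & u4] =
    (u1 ++ [:: p2; p1] ++ u2) ++ q2 :: q1 :: u3 ++ [:: r1; r2] ++ u4.
  by rewrite -!catA.
rewrite flat_contrib_swap; first last.
- exact: not_pair.
- by [].
- by move=> b; rewrite -!catA; apply: mem_perm.
- by move=> b; rewrite -!catA; apply: mem_perm.
- by rewrite -!catA -(perm_uniq perm_W1).
have -> : (u1 ++ [:: p2; p1] ++ u2) ++ [:: q1, q2 & u3 ++ [:: r1; r2] ++ u4] =
    u1 ++ p2 :: p1 :: u2 ++ [:: q1; q2] ++ u3 ++ [:: r1; r2] ++ u4.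
  by rewrite -!catA.
rewrite flat_contrib_swap //.
- by move=> b; apply: gauss_wf_mem.
- by move=> b; apply: gauss_wf_mem.
- exact: not_pair.
Qed.

Let pos := block_pos (size u1) (size u2) (size u3).

Let pos_inj : injective pos.
Proof. by apply: incn_inj => x y; rewrite /pos leqNgt [in RHS]leqNgt block_pos_mono. Qed.

Let pos_arc i j k : right_arc (pos i) (pos j) (pos k) = right_arc i j k.
Proof. by apply: right_arc_mono => x y _ _; rewrite block_pos_mono. Qed.

Let index_W := index_blocks W_uniq.
Let index_W' := index_blocks W'_uniq.

Let six_uniq : uniq [:: p1; p2; q1; q2; r1; r2].
Proof.
set six := [:: p1; p2; q1; q2; r1; r2].
apply: (@map_uniq _ _ (index^~ W)).
have -> : map (index^~ W) six = map pos (iota 0 6).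
  apply: (@eq_from_nth _ 0%N); rewrite !size_map ?size_iota // => k k6.
  by rewrite (nth_map p1) // (nth_map 0%N) ?size_iota // nth_iota // index_W.
by rewrite (map_inj_uniq pos_inj) iota_uniq.
Qed.

Let tri_labels : {subset tri <= labels W}.
Proof.
have mem_ends (y z : letter) : y \in W -> z \in W -> {subset [:: y.1; z.1] <= labels W}.
  by move=> yW zW x; rewrite !inE => /orP [] /eqP ->; apply: mem_labels_letter.
have [p1W p2W q1W q2W] : [/\ p1 \in W, p2 \in W, q1 \in W & q2 \in W].
  by rewrite /W !mem_cat !inE ?eqxx ?orbT.
have p_labels := mem_ends p1 p2 p1W p2W.
have q_labels := mem_ends q1 q2 q1W q2W.
move: (pair_is_labels p_pair) (pair_is_labels q_pair) => /andP [? ?] /andP [_ ?].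
move=> x; rewrite !inE => /or3P [] /eqP ->; [apply: p_labels | apply: p_labels | apply: q_labels];
  rewrite // !inE eqxx ?orbT.
Qed.

Lemma flat_index_R3 c : c \in labels W -> flat_index W c = flat_index W' c.
Proof.
move=> cW; have labels_W' : perm_eq (labels W) (labels W').
  by apply: perm_labels => x; rewrite (perm_mem perm_R3).
case ct : (c \in tri); last first.
  by apply: flat_index_eq => // d dW _; rewrite flat_contrib_outside // ct.
set rest := [seq d <- labels W | d \notin tri].
have labels_split : perm_eq (labels W) (tri ++ rest).
  apply: uniq_perm; rewrite ?labels_uniq //.
    rewrite cat_uniq tri_uniq filter_uniq ?labels_uniq // andbT.
    by apply/hasPn => d; rewrite mem_filter => /andP [].
  move=> d; rewrite mem_cat mem_filter.
  by case dt : (d \in tri) => //=; rewrite tri_labels.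
have labels_split' : perm_eq (labels W') (tri ++ rest).
  by apply: perm_trans labels_split; rewrite perm_sym.
rewrite /flat_index /Ind (perm_big _ labels_split) (perm_big _ labels_split') !big_cat /=.
congr (_ + _).
  by symmetry; apply: (flat_contrib_triangle tri_uniq p_pair q_pair r_pair realizable
    six_uniq pos_arc index_W index_W').
rewrite big_seq_cond [in RHS]big_seq_cond; apply: eq_bigr => d /andP [].
by rewrite mem_filter => /andP [dt dW] _; rewrite flat_contrib_outside // ct.
Qed.

Lemma flat_writhe_R3 : flat_writhe W =1 flat_writhe W'.
Proof.
apply: flat_writhe_eq; last exact: flat_index_R3.
by apply: perm_labels => x; rewrite (perm_mem perm_R3).
Qed.
End R3.

Lemma flat_move_invariant x y : flat_move x y ->
  (gauss_wf x = gauss_wf y) /\ (gauss_wf x -> flat_writhe x =1 flat_writhe y).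
Proof.
case=> {x y}.
- move=> w; split; first by rewrite (gauss_wf_perm (permEl (perm_rot 1 w))).
  exact: flat_writhe_rot1.
- move=> w f f_inj; split; first by rewrite gauss_wf_relabel.
  by move=> _; apply: flat_writhe_relabel.
- move=> u v a b a_fresh; split; first by rewrite gauss_wf_R1.
  by move=> _ n; rewrite flat_writhe_R1.
- move=> u1 u2 u3 a b t swap ab a_fresh b_fresh; split; first by rewrite gauss_wf_R2.
  by move=> _ n; rewrite flat_writhe_R2.
- move=> u1 u2 u3 u4 p1 p2 q1 q2 r1 r2 [x12 [x13 [x23 [[tri p q r] realizable]]]].
  split; first exact: gauss_wf_R3.
  by move=> w_wf; apply: (flat_writhe_R3 tri p q r realizable w_wf).
Qed.

Lemma flat_equiv_invariant x y : flat_equiv x y ->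
  (gauss_wf x = gauss_wf y) /\ (gauss_wf x -> flat_writhe x =1 flat_writhe y).
Proof.
elim=> {x y} [x y /flat_move_invariant //| x | x y _ [wf_xy eq_xy] | x y z _ [wf_xy eq_xy] _ [wf_yz eq_yz]].
- by [].
- by split=> // y_wf n; rewrite eq_xy // wf_xy.
- split=> [|x_wf n]; first by rewrite wf_xy.
  by rewrite eq_xy // eq_yz // -wf_xy.
Qed.

Theorem corollary3p5 (w : gword) (s : nat -> bool) :
  gauss_wf w ->
  writhe_poly w s <> (fun n : int => writhe_poly w s (- n)%R) ->
  ~ flat_equiv (flat_of w s) trivial_flat.
Proof.
move=> w_wf asym /flat_equiv_invariant [_ eq_writhe]; apply: asym.
apply: functional_extensionality => n; apply/eqP; rewrite -subr_eq0.
have [->|n0] := eqVneq n 0; first by rewrite oppr0 subrr.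
rewrite writhe_polyB // eq_writhe; last exact: gauss_wf_flat.
by rewrite /flat_writhe big_nil.
Qed.
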